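(* Let $\alpha \in \mathbb{R}_{>0}$ and $M_\alpha = \{f(\alpha) \mid f(x) \in \mathbb{N}_0[x,x^{-1}]\}$ as an additive monoid. The following are equivalent: (a) $M_\alpha$ is an FFM; (b) $M_\alpha$ is a BFM; (c) $M_\alpha$ satisfies the ACCP.
   Context: $\mathbb{N}_0[x,x^{-1}]$ denotes the semiring of Laurent polynomials with coefficients in $\mathbb{N}_0$. For an atomic reduced additive monoid $M$ and nonzero $x \in M$, $\mathsf{Z}(x)$ is the set of factorizations of $x$ (formal sums of atoms, up to order, adding to $x$) and $\mathsf{L}(x)$ the set of their lengths (number of atoms counted with repetition). $M$ is an FFM (finite factorization monoid) if it is atomic and $\mathsf{Z}(x)$ is finite for all nonzero $x$, and a BFM (bounded factorization monoid) if it is atomic and $\mathsf{L}(x)$ is finite for all nonzero $x$. $M$ satisfies the ACCP if every ascending chain of principal ideals $x_1 + M \subseteq x_2 + M \subseteq \cdots$ eventually stabilizes. *)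

From Stdlib Require Import Reals List Permutation.
Import ListNotations.
Open Scope R_scope.

(* A Laurent polynomial f with coefficients in N_0 is a finite sum of
   monomials c * x^k (c : nat, k : Z); we represent it by the list of its
   monomials (c, k).  Its evaluation at alpha: *)
Definition laurent_eval (f : list (nat * Z)) (alpha : R) : R :=
  fold_right (fun ck acc => INR (fst ck) * powerRZ alpha (snd ck) + acc) 0 f.

Definition M_alpha (alpha : R) (x : R) : Prop :=
  exists f : list (nat * Z), x = laurent_eval f alpha.

Section Monoid.
Variable M : R -> Prop.

Definition is_unit (u : R) : Prop := M u /\ exists v, M v /\ u + v = 0.

Definition is_atom (a : R) : Prop :=
  M a /\ ~ is_unit a /\
  forall b c, M b -> M c -> a = b + c -> is_unit b \/ is_unit c.

Definition sumR (l : list R) : R := fold_right Rplus 0 l.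

(* a factorization of x: a finite formal sum of atoms adding to x
   (lists, identified up to order via Permutation) *)
Definition is_factorization (x : R) (z : list R) : Prop :=
  Forall is_atom z /\ sumR z = x.

Definition nonzero_el (x : R) : Prop := M x /\ x <> 0.

Definition atomic : Prop :=
  forall x, nonzero_el x -> exists z, is_factorization x z.

Definition FFM : Prop :=
  atomic /\
  forall x, nonzero_el x ->
    exists F : list (list R),
      forall z, is_factorization x z -> exists z', In z' F /\ Permutation z z'.

(* L(x) finite (a set of naturals is finite iff bounded) *)
Definition BFM : Prop :=
  atomic /\
  forall x, nonzero_el x ->
    exists N : nat, forall z, is_factorization x z -> (length z <= N)%nat.

(* principal ideal inclusion  x + M ⊆ y + M *)
Definition pideal_incl (x y : R) : Prop :=
  forall m, M m -> exists m', M m' /\ x + m = y + m'.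

Definition ACCP : Prop :=
  forall s : nat -> R,
    (forall n, M (s n)) ->
    (forall n, pideal_incl (s n) (s (S n))) ->
    exists N, forall n, (N <= n)%nat ->
      pideal_incl (s n) (s N) /\ pideal_incl (s N) (s n).
End Monoid.

From Stdlib Require Import Reals List Permutation Lia Lra ZArith.
From Stdlib Require Import Classical ClassicalEpsilon FunctionalExtensionality PropExtensionality.
Import ListNotations.
Open Scope R_scope.

(* Under ACCP, 1 is an atom, so the atoms of M_alpha are exactly the powers
   alpha^k and M_alpha is atomic.  As M_(1/alpha) = M_alpha and M_1 = N_0, only
   alpha < 1 needs work.  There a relation sum alpha^p = sum alpha^z with all
   p <= K < z telescopes to some u > 0 with (1 - alpha) u in M_alpha, so
   u, alpha u, alpha^2 u, ... violates ACCP.  Without such relations, an element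
   with infinitely many factorizations always has a proper divisor y - alpha^k
   with infinitely many factorizations, and iterating violates ACCP again.
   Conversely, BFM implies ACCP because every strict step of a chain of
   divisors costs an atom. *)

Lemma sumR_app l1 l2 : sumR (l1 ++ l2) = sumR l1 + sumR l2.
Proof. induction l1 as [|x l1 IH]; unfold sumR in *; simpl; lra. Qed.

Lemma sumR_repeat x n : sumR (repeat x n) = INR n * x.
Proof.
  induction n as [|n IH]; unfold sumR in *; simpl repeat; cbn [fold_right]; [simpl; lra|].
  rewrite IH, S_INR. ring.
Qed.

Definition finite_factorizations (M : R -> Prop) (y : R) : Prop :=
  exists F : list (list R),
    forall z, is_factorization M y z -> exists z', In z' F /\ Permutation z z'.

Lemma FFM_BFM M : FFM M -> BFM M.
Proof.
  intros [Hat Hfin]. split; [exact Hat|]. intros x Hx.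
  destruct (Hfin x Hx) as [F HF].
  exists (list_max (map (@length R) F)). intros z Hz.
  destruct (HF z Hz) as [z' [Hin Hperm]]. rewrite (Permutation_length Hperm).
  pose proof (proj1 (list_max_le _ _) (le_n (list_max (map (@length R) F)))) as Hall.
  rewrite Forall_forall in Hall. apply Hall, in_map, Hin.
Qed.

Lemma factorization_remove M y z x :
  is_factorization M y z -> In x z ->
  exists z0, Permutation z (x :: z0) /\ is_factorization M (y - x) z0.
Proof.
  intros [Hz Hsum] Hx. destruct (in_split _ _ Hx) as [l1 [l2 ->]].
  exists (l1 ++ l2). split; [apply Permutation_sym, Permutation_middle|].
  apply Forall_app in Hz as [Hz1 Hz2]. split.
  - apply Forall_app. split; [exact Hz1 | exact (Forall_inv_tail Hz2)].
  - rewrite sumR_app in *. unfold sumR in *. simpl in Hsum. lra.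
Qed.

Section PositiveMonoid.
Variable M : R -> Prop.
Hypothesis M_0 : M 0.
Hypothesis M_add : forall x y, M x -> M y -> M (x + y).
Hypothesis M_ge0 : forall x, M x -> 0 <= x.

Lemma is_unit_iff u : is_unit M u <-> M u /\ u = 0.
Proof.
  split.
  - intros [Hu [v [Hv Huv]]]. pose proof (M_ge0 u Hu). pose proof (M_ge0 v Hv).
    split; [exact Hu | lra].
  - intros [Hu ->]. split; [exact Hu|]. exists 0. split; [exact M_0 | lra].
Qed.

Lemma atom_gt0 x : is_atom M x -> 0 < x.
Proof.
  intros [Hx [Hnu _]]. pose proof (M_ge0 x Hx).
  destruct (Req_dec x 0) as [->|]; [|lra]. exfalso. now apply Hnu, is_unit_iff.
Qed.

Lemma sumR_atoms_mem z : Forall (is_atom M) z -> M (sumR z).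
Proof. induction 1 as [|x z [Hx _] _ IH]; [exact M_0|]. now apply M_add. Qed.

Lemma In_factorization_le z x : Forall (is_atom M) z -> In x z -> x <= sumR z.
Proof.
  intros Hz Hx. destruct (in_split _ _ Hx) as [l1 [l2 ->]].
  apply Forall_app in Hz as [Hz1 Hz2].
  pose proof (M_ge0 _ (sumR_atoms_mem _ Hz1)).
  pose proof (M_ge0 _ (sumR_atoms_mem _ (Forall_inv_tail Hz2))).
  rewrite sumR_app. unfold sumR in *. simpl. lra.
Qed.

Lemma finite_factorizations_0 : finite_factorizations M 0.
Proof.
  exists [[]]. intros z [Hz Hsum]. exists []. split; [now left|].
  destruct z as [|x z]; [apply Permutation_refl|]. exfalso.
  pose proof (In_factorization_le (x :: z) x Hz (or_introl eq_refl)).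
  pose proof (atom_gt0 x (Forall_inv Hz)). lra.
Qed.

Lemma finite_factorizations_meeting y (As : list R) :
  (forall x, In x As -> M (y - x) -> finite_factorizations M (y - x)) ->
  exists F, forall z, is_factorization M y z -> (exists x, In x As /\ In x z) ->
    exists z', In z' F /\ Permutation z z'.
Proof.
  induction As as [|x As IH]; intros Hfin.
  - exists []. intros z _ [x [[] _]].
  - destruct IH as [F HF]; [intros x' Hx'; apply Hfin; now right|].
    destruct (classic (M (y - x))) as [Hyx|Hyx].
    + destruct (Hfin x (or_introl eq_refl) Hyx) as [Fx HFx].
      exists (map (cons x) Fx ++ F). intros z Hz [x' [[<-|Hx'] Hz']].
      * destruct (factorization_remove _ _ _ _ Hz Hz') as [z0 [Hperm Hz0]].
        destruct (HFx z0 Hz0) as [w [Hw Hpw]]. exists (x :: w). split.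
        -- apply in_or_app. left. now apply in_map.
        -- eapply perm_trans; [exact Hperm | now apply perm_skip].
      * destruct (HF z Hz (ex_intro _ x' (conj Hx' Hz'))) as [w [Hw Hpw]].
        exists w. split; [apply in_or_app; now right | exact Hpw].
    + exists F. intros z Hz [x' [[<-|Hx'] Hz']]; [|apply HF; eauto].
      destruct (factorization_remove _ _ _ _ Hz Hz') as [z0 [_ [Hz0 Hsum]]].
      exfalso. apply Hyx. rewrite <- Hsum. now apply sumR_atoms_mem.
Qed.

Lemma not_ACCP_of_descent (Q : R -> Prop) y0 :
  Q y0 -> (forall y, Q y -> M y) ->
  (forall y, Q y -> exists y', Q y' /\ M (y - y') /\ y' < y) ->
  ~ ACCP M.
Proof.
  intros Hy0 HQM Hstep Hacc.
  set (P := fun y y' => Q y' /\ M (y - y') /\ y' < y).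
  set (next := fun y => epsilon (inhabits 0) (P y)).
  assert (Hnext : forall y, Q y -> P y (next y))
    by (intros y Hy; apply epsilon_spec, Hstep, Hy).
  set (s := fun n => Nat.iter n next y0).
  assert (Hs : forall n, Q (s n)) by (induction n; [exact Hy0 | apply Hnext, IHn]).
  destruct (Hacc s) as [N HN].
  - intro n. apply HQM, Hs.
  - intros n m Hm. exists (s n - s (S n) + m). split; [|lra].
    apply M_add; [apply (Hnext _ (Hs n)) | exact Hm].
  - destruct (HN (S N) (le_S _ _ (le_n N))) as [Hincl _].
    destruct (Hincl 0 M_0) as [m [Hm Heq]].
    pose proof (M_ge0 m Hm). destruct (Hnext _ (Hs N)) as [_ [_ Hlt]].
    change (s (S N)) with (next (s N)) in Heq. lra.
Qed.

Lemma atomic_factorization x : atomic M -> M x -> exists z, is_factorization M x z.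
Proof.
  intros Hat Hx. destruct (Req_dec x 0) as [->|Hx0].
  - exists []. split; [constructor | reflexivity].
  - exact (Hat x (conj Hx Hx0)).
Qed.

Lemma BFM_ACCP : BFM M -> ACCP M.
Proof.
  intros [Hat Hlen] s Hs Hincl.
  assert (Hstep : forall n, M (s n - s (S n))).
  { intro n. destruct (Hincl n 0 M_0) as [m [Hm Heq]]. now replace (s n - s (S n)) with m by lra. }
  assert (Hdiv : forall n m, (n <= m)%nat -> M (s n - s m)).
  { intros n m Hnm. induction Hnm as [|m _ IH]; [now replace (s n - s n) with 0 by ring|].
    replace (s n - s (S m)) with (s n - s m + (s m - s (S m))) by ring. now apply M_add. }
  enough (Hconst : exists N, forall n, (N <= n)%nat -> s n = s N).
  { destruct Hconst as [N HN]. exists N. intros n Hn. rewrite (HN n Hn).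
    split; intros m Hm; exists m; split; auto. }
  destruct (Req_dec (s 0%nat) 0) as [Hs0|Hs0].
  { exists 0%nat. intros n _.
    pose proof (M_ge0 _ (Hs n)). pose proof (M_ge0 _ (Hdiv 0%nat n (Nat.le_0_l n))). lra. }
  destruct (Hlen (s 0%nat) (conj (Hs 0%nat) Hs0)) as [B HB].
  apply NNPP. intro Hnconst.
  assert (Hlong : forall j, exists n z,
             Forall (is_atom M) z /\ sumR z = s 0%nat - s n /\ (j <= length z)%nat).
  { induction j as [|j [n [z [Hz [Hsum Hj]]]]].
    - exists 0%nat, []. repeat split; [constructor | unfold sumR; simpl; lra | lia].
    - assert (Hm : exists m, (n <= m)%nat /\ s m <> s n).
      { apply NNPP. intro Hno. apply Hnconst. exists n. intros m Hm. apply NNPP. eauto. }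
      destruct Hm as [m [Hnm Hne]].
      assert (Hnm0 : s n - s m <> 0) by (intro; apply Hne; lra).
      destruct (Hat (s n - s m) (conj (Hdiv n m Hnm) Hnm0)) as [w [Hw Hwsum]].
      exists m, (z ++ w). repeat split.
      + now apply Forall_app.
      + rewrite sumR_app. lra.
      + destruct w; [unfold sumR in Hwsum; simpl in Hwsum; lra|]. rewrite length_app. simpl. lia. }
  destruct (Hlong (S B)) as [n [z [Hz [Hsum Hj]]]].
  destruct (atomic_factorization (s n) Hat (Hs n)) as [w [Hw Hwsum]].
  assert (Hfact : is_factorization M (s 0%nat) (z ++ w)).
  { split; [now apply Forall_app | rewrite sumR_app; lra]. }
  pose proof (HB _ Hfact). rewrite length_app in *. lia.
Qed.

End PositiveMonoid.

Definition sumpow (a : R) (l : list Z) : R := sumR (map (powerRZ a) l).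

Lemma sumpow_nil a : sumpow a [] = 0.
Proof. reflexivity. Qed.

Lemma sumpow_cons a k l : sumpow a (k :: l) = powerRZ a k + sumpow a l.
Proof. reflexivity. Qed.

Lemma sumpow_app a l1 l2 : sumpow a (l1 ++ l2) = sumpow a l1 + sumpow a l2.
Proof. unfold sumpow. now rewrite map_app, sumR_app. Qed.

Lemma M_alpha_sumpow a x : M_alpha a x <-> exists l, x = sumpow a l.
Proof.
  split; intros [f ->].
  - exists (flat_map (fun ck => repeat (snd ck) (fst ck)) f).
    induction f as [|[c k] f IH]; [reflexivity|].
    cbn [flat_map fst snd]. rewrite sumpow_app, <- IH.
    unfold sumpow. rewrite map_repeat, sumR_repeat. reflexivity.
  - exists (map (fun k => (1%nat, k)) f).
    induction f as [|k f IH]; [reflexivity|].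
    rewrite sumpow_cons, IH. simpl. ring.
Qed.

Lemma M_alpha_inv a : M_alpha (/ a) = M_alpha a.
Proof.
  assert (Hopp : forall l, sumpow (/ a) l = sumpow a (map Z.opp l)).
  { induction l as [|k l IH]; [reflexivity|].
    cbn [map]. rewrite !sumpow_cons, IH, powerRZ_inv', powerRZ_neg'. reflexivity. }
  apply functional_extensionality. intro x. apply propositional_extensionality.
  rewrite !M_alpha_sumpow. split; intros [l ->].
  - exists (map Z.opp l). apply Hopp.
  - exists (map Z.opp l). rewrite Hopp, map_map, <- (map_id l) at 1.
    f_equal. apply map_ext. intro k. now rewrite Z.opp_involutive.
Qed.

Section Positive.
Variable a : R.
Hypothesis a_gt0 : 0 < a.

Lemma sumpow_ge0 l : 0 <= sumpow a l.
Proof.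
  induction l as [|k l IH]; [apply Rle_refl|].
  rewrite sumpow_cons. pose proof (powerRZ_lt a k a_gt0). lra.
Qed.

Lemma M_alpha_ge0 x : M_alpha a x -> 0 <= x.
Proof. intros [l ->]%M_alpha_sumpow. apply sumpow_ge0. Qed.

Lemma M_alpha_0 : M_alpha a 0.
Proof. exists []. reflexivity. Qed.

Lemma M_alpha_add x y : M_alpha a x -> M_alpha a y -> M_alpha a (x + y).
Proof.
  intros [l ->]%M_alpha_sumpow [m ->]%M_alpha_sumpow.
  apply M_alpha_sumpow. exists (l ++ m). now rewrite sumpow_app.
Qed.

Lemma M_alpha_powerRZ k : M_alpha a (powerRZ a k).
Proof. apply M_alpha_sumpow. exists [k]. unfold sumpow. simpl. ring. Qed.

Lemma M_alpha_scale j x : M_alpha a x -> M_alpha a (powerRZ a j * x).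
Proof.
  intros [l ->]%M_alpha_sumpow. apply M_alpha_sumpow. exists (map (Z.add j) l).
  induction l as [|k l IH]; [unfold sumpow; simpl; ring|].
  cbn [map]. rewrite !sumpow_cons, <- IH, powerRZ_add by lra. ring.
Qed.

Lemma M_alpha_sub_powerRZ x : M_alpha a x -> x <> 0 -> exists k, M_alpha a (x - powerRZ a k).
Proof.
  intros [[|k l] ->]%M_alpha_sumpow Hx; [now contradiction Hx|].
  exists k. apply M_alpha_sumpow. exists l. rewrite sumpow_cons. ring.
Qed.

Lemma is_unit_M_alpha u : is_unit (M_alpha a) u <-> M_alpha a u /\ u = 0.
Proof. exact (is_unit_iff _ M_alpha_0 M_alpha_ge0 u). Qed.

Lemma atom_M_alpha_powerRZ x : is_atom (M_alpha a) x -> exists k, x = powerRZ a k.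
Proof.
  intros Hat. pose proof (atom_gt0 _ M_alpha_0 M_alpha_ge0 x Hat) as Hx.
  destruct Hat as [HxM [_ Hirr]].
  destruct (M_alpha_sub_powerRZ x HxM) as [k Hk]; [lra|]. exists k.
  pose proof (powerRZ_lt a k a_gt0).
  assert (Hsplit : x = powerRZ a k + (x - powerRZ a k)) by ring.
  destruct (Hirr _ _ (M_alpha_powerRZ k) Hk Hsplit) as [Hu|Hu];
    apply is_unit_M_alpha in Hu; lra.
Qed.

Lemma atoms_M_alpha_exponents z :
  Forall (is_atom (M_alpha a)) z -> exists l, z = map (powerRZ a) l.
Proof.
  induction 1 as [|x z Hx _ [l ->]]; [now exists []|].
  destruct (atom_M_alpha_powerRZ x Hx) as [k ->]. now exists (k :: l).
Qed.

(* If 1 = b + c with b, c nonzero, then y = (y - a^k) + a^k b + a^k c has the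
   proper divisor a^k b, and this can be repeated forever. *)
Lemma ACCP_one_atom : ACCP (M_alpha a) -> is_atom (M_alpha a) 1.
Proof.
  intros Hacc. pose proof (M_alpha_powerRZ 0) as H1. simpl in H1.
  split; [exact H1|split]; [intros Hu; apply is_unit_M_alpha in Hu; lra|].
  intros b c Hb Hc Hbc. apply NNPP. intros [Hnb Hnc]%not_or_and.
  assert (b <> 0) by (intro; apply Hnb, is_unit_M_alpha; auto).
  assert (c <> 0) by (intro; apply Hnc, is_unit_M_alpha; auto).
  pose proof (M_alpha_ge0 b Hb). pose proof (M_alpha_ge0 c Hc).
  refine (not_ACCP_of_descent _ M_alpha_0 M_alpha_add M_alpha_ge0
            (fun y => M_alpha a y /\ 0 < y) 1 _ _ _ Hacc); [split; [exact H1 | lra] | tauto |].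
  intros y [Hy Hy0]. destruct (M_alpha_sub_powerRZ y Hy) as [k Hk]; [lra|].
  pose proof (powerRZ_lt a k a_gt0). pose proof (M_alpha_ge0 _ Hk).
  assert (Hk1 : powerRZ a k = powerRZ a k * b + powerRZ a k * c)
    by (rewrite <- Rmult_plus_distr_l, <- Hbc; ring).
  exists (powerRZ a k * b). repeat split.
  - now apply M_alpha_scale.
  - nra.
  - replace (y - powerRZ a k * b) with (y - powerRZ a k + powerRZ a k * c) by lra.
    now apply M_alpha_add, M_alpha_scale.
  - nra.
Qed.

Lemma one_atom_powerRZ_atom k : is_atom (M_alpha a) 1 -> is_atom (M_alpha a) (powerRZ a k).
Proof.
  intros [_ [_ Hirr]]. pose proof (powerRZ_lt a k a_gt0).
  split; [apply M_alpha_powerRZ | split]; [intros Hu; apply is_unit_M_alpha in Hu; lra|].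
  intros b c Hb Hc Hbc.
  assert (Hinv : powerRZ a (- k) * powerRZ a k = 1)
    by (rewrite <- powerRZ_add, Z.add_opp_diag_l by lra; reflexivity).
  pose proof (powerRZ_lt a (- k) a_gt0).
  assert (Hsplit : 1 = powerRZ a (- k) * b + powerRZ a (- k) * c)
    by (rewrite <- Rmult_plus_distr_l, <- Hbc; exact (eq_sym Hinv)).
  destruct (Hirr _ _ (M_alpha_scale (- k) b Hb) (M_alpha_scale (- k) c Hc) Hsplit) as [Hu|Hu];
    [left | right]; apply is_unit_M_alpha in Hu as [_ Hu]; apply is_unit_M_alpha; split; auto;
    apply Rmult_integral in Hu as [Hu|Hu]; lra.
Qed.

Lemma one_atom_atomic : is_atom (M_alpha a) 1 -> atomic (M_alpha a).
Proof.
  intros H1 x [[l ->]%M_alpha_sumpow _]. exists (map (powerRZ a) l). split; [|reflexivity].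
  apply Forall_forall. intros y [k [<- _]]%in_map_iff. now apply one_atom_powerRZ_atom.
Qed.

End Positive.

Lemma sumpow_1 l : sumpow 1 l = INR (length l).
Proof.
  induction l as [|k l IH]; [reflexivity|].
  rewrite sumpow_cons, IH, powerRZ_R1. cbn [length]. rewrite S_INR. ring.
Qed.

Lemma one_atom_M_alpha_1 : is_atom (M_alpha 1) 1.
Proof.
  split; [apply (M_alpha_powerRZ 1 0) | split].
  - intros Hu. apply (is_unit_M_alpha 1 Rlt_0_1) in Hu. lra.
  - intros b c [l ->]%M_alpha_sumpow [m ->]%M_alpha_sumpow Hbc.
    rewrite !sumpow_1, <- plus_INR in Hbc. change 1 with (INR 1) in Hbc. apply INR_eq in Hbc.
    destruct l; [left | right; destruct m; [|simpl in Hbc; lia]];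
      apply (is_unit_M_alpha 1 Rlt_0_1); split; try apply M_alpha_sumpow; eauto.
Qed.

Lemma FFM_M_alpha_1 : FFM (M_alpha 1).
Proof.
  pose proof (one_atom_atomic 1 Rlt_0_1 one_atom_M_alpha_1) as Hat.
  split; [exact Hat|]. intros x Hx. destruct (Hat x Hx) as [z0 Hz0].
  assert (Hrepeat : forall w, is_factorization (M_alpha 1) x w ->
                              w = repeat 1 (length w) /\ INR (length w) = x).
  { intros w [Hw Hsum]. destruct (atoms_M_alpha_exponents 1 Rlt_0_1 w Hw) as [l ->].
    replace (map (powerRZ 1) l) with (repeat 1 (length l)) in *
      by (rewrite <- map_const; apply map_ext; intro; now rewrite powerRZ_R1).
    rewrite repeat_length, <- Hsum, sumR_repeat. split; [reflexivity | ring]. }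
  exists [z0]. intros z Hz. exists z0. split; [now left|].
  destruct (Hrepeat z Hz) as [-> Hlen], (Hrepeat z0 Hz0) as [-> Hlen0].
  rewrite repeat_length in *. rewrite <- Hlen0 in Hlen. apply INR_eq in Hlen as ->.
  apply Permutation_refl.
Qed.

Fixpoint Zrange (p : Z) (n : nat) : list Z :=
  match n with O => [] | S n => p :: Zrange (p + 1) n end.

Lemma In_Zrange p n k : In k (Zrange p n) <-> (p <= k < p + Z.of_nat n)%Z.
Proof. revert p; induction n as [|n IH]; intro p; simpl; [lia|]. rewrite IH. lia. Qed.

Lemma Forall_le_fold_Zmax (l : list Z) : Forall (fun k => k <= fold_right Z.max 0 l)%Z l.
Proof.
  induction l as [|k l IH]; constructor; [simpl; lia|].
  eapply Forall_impl; [|exact IH]. simpl. lia.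
Qed.

(* Multiplied by (1 - a), each block p, p + 1, ..., z - 1 telescopes to
   a^p - a^z. *)
Fixpoint bridge (P Zs : list Z) : list Z :=
  match P, Zs with
  | p :: P', z :: Zs' => Zrange p (Z.to_nat (z - p)) ++ bridge P' Zs'
  | _, _ => []
  end.

Section Contracting.
Variable a : R.
Hypothesis a_gt0 : 0 < a.
Hypothesis a_lt1 : a < 1.
Let M_0 := M_alpha_0 a.
Let M_add := M_alpha_add a.
Let M_ge0 := M_alpha_ge0 a a_gt0.

Lemma powerRZ_lt_decr i j : (i < j)%Z -> powerRZ a j < powerRZ a i.
Proof.
  intros Hij. replace j with (i + Z.of_nat (S (Z.to_nat (j - i - 1))))%Z by lia.
  rewrite powerRZ_add, <- pow_powerRZ by lra.
  pose proof (powerRZ_lt a i a_gt0).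
  assert (a ^ S (Z.to_nat (j - i - 1)) < 1) by (apply pow_lt_1_compat; [lra | lia]).
  nra.
Qed.

Lemma powerRZ_le_decr i j : (i <= j)%Z -> powerRZ a j <= powerRZ a i.
Proof.
  intros Hij. destruct (Z.eq_dec i j) as [->|Hne]; [apply Rle_refl|].
  apply Rlt_le, powerRZ_lt_decr. lia.
Qed.

Lemma powerRZ_le_exponent_bound y : 0 < y -> exists N, forall k, powerRZ a k <= y -> (N <= k)%Z.
Proof.
  intros Hy. pose proof (Rinv_0_lt_compat y Hy) as Hy'.
  destruct (pow_lt_1_zero a ltac:(rewrite Rabs_right; lra) (/ y) Hy') as [n Hn].
  specialize (Hn n (le_n n)). rewrite Rabs_right in Hn by (apply Rle_ge, pow_le; lra).
  assert (Hbig : y < powerRZ a (- Z.of_nat n)).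
  { rewrite powerRZ_neg', <- pow_powerRZ, <- (Rinv_inv y).
    apply Rinv_lt_contravar; [|exact Hn].
    apply Rmult_lt_0_compat; [apply pow_lt; lra | exact Hy']. }
  exists (- Z.of_nat n)%Z. intros k Hk.
  destruct (Z_lt_le_dec k (- Z.of_nat n)) as [Hlt|]; [|assumption].
  pose proof (powerRZ_lt_decr k _ Hlt). lra.
Qed.

Lemma sumpow_Zrange p n :
  (1 - a) * sumpow a (Zrange p n) = powerRZ a p - powerRZ a (p + Z.of_nat n).
Proof.
  revert p; induction n as [|n IH]; intro p; cbn [Zrange].
  - rewrite Z.add_0_r, sumpow_nil. ring.
  - rewrite sumpow_cons, Rmult_plus_distr_l, IH, (powerRZ_add a p 1) by lra.
    replace (p + 1 + Z.of_nat n)%Z with (p + Z.of_nat (S n))%Z by lia.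
    simpl powerRZ. ring.
Qed.

Lemma sumpow_bridge P Zs :
  (length P <= length Zs)%nat -> (forall p z, In p P -> In z Zs -> (p <= z)%Z) ->
  (1 - a) * sumpow a (bridge P Zs) = sumpow a P - sumpow a (firstn (length P) Zs).
Proof.
  revert Zs; induction P as [|p P IH]; intros [|z Zs] Hlen Hle; cbn in Hlen;
    [ unfold sumpow; simpl; ring | unfold sumpow; simpl; ring | lia |].
  cbn [bridge length firstn].
  rewrite sumpow_app, !sumpow_cons, Rmult_plus_distr_l, sumpow_Zrange, IH;
    [| lia | intros; apply Hle; now right].
  assert (p <= z)%Z by (apply Hle; now left).
  replace (p + Z.of_nat (Z.to_nat (z - p)))%Z with z by lia. ring.
Qed.

Lemma sumpow_lower K l : Forall (fun k => k <= K)%Z l -> INR (length l) * powerRZ a K <= sumpow a l.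
Proof.
  induction 1 as [|k l Hk _ IH]; [unfold sumpow; simpl; lra|].
  cbn [length]. rewrite S_INR, sumpow_cons. pose proof (powerRZ_le_decr k K Hk). lra.
Qed.

Lemma sumpow_upper K l : Forall (fun k => K <= k)%Z l -> sumpow a l <= INR (length l) * powerRZ a K.
Proof.
  induction 1 as [|k l Hk _ IH]; [unfold sumpow; simpl; lra|].
  cbn [length]. rewrite S_INR, sumpow_cons. pose proof (powerRZ_le_decr K k Hk). lra.
Qed.

Lemma separated_relation_contraction P Zs K :
  P <> [] -> Forall (fun p => p <= K)%Z P -> Forall (fun z => K < z)%Z Zs ->
  sumpow a P = sumpow a Zs ->
  exists u, 0 < u /\ M_alpha a u /\ M_alpha a ((1 - a) * u).
Proof.
  intros HP HPK HZK Hrel.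
  assert (Hlen : (length P <= length Zs)%nat).
  { pose proof (sumpow_lower K P HPK).
    pose proof (sumpow_upper (K + 1) Zs (Forall_impl _ (fun z Hz => Zlt_le_succ _ _ Hz) HZK)).
    rewrite powerRZ_add in * by lra. simpl powerRZ in *.
    pose proof (powerRZ_lt a K a_gt0).
    assert (0 <= INR (length Zs) * powerRZ a K) by (apply Rmult_le_pos; [apply pos_INR | lra]).
    apply INR_le, Rmult_le_reg_r with (powerRZ a K); nra. }
  assert (Hle : forall p z, In p P -> In z Zs -> (p <= z)%Z).
  { intros p z Hp Hz. rewrite Forall_forall in HPK, HZK.
    specialize (HPK p Hp). specialize (HZK z Hz). lia. }
  exists (sumpow a (bridge P Zs)). repeat split.
  - destruct P as [|p P]; [contradiction|]. destruct Zs as [|z Zs]; [cbn in Hlen; lia|].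
    assert (Hpz : (p < z)%Z) by (apply Forall_inv in HPK, HZK; lia).
    cbn [bridge]. destruct (Z.to_nat (z - p)) as [|n] eqn:E; [lia|].
    cbn [Zrange app]. rewrite sumpow_cons.
    pose proof (powerRZ_lt a p a_gt0).
    pose proof (sumpow_ge0 a a_gt0 (Zrange (p + 1) n ++ bridge P Zs)). lra.
  - apply M_alpha_sumpow. eauto.
  - apply M_alpha_sumpow. exists (skipn (length P) Zs).
    rewrite sumpow_bridge by assumption.
    rewrite Hrel, <- (firstn_skipn (length P) Zs) at 1. rewrite sumpow_app. ring.
Qed.

Lemma contraction_not_ACCP u :
  0 < u -> M_alpha a u -> M_alpha a ((1 - a) * u) -> ~ ACCP (M_alpha a).
Proof.
  intros Hu0 Hu Hu1.
  apply (not_ACCP_of_descent _ M_0 M_add M_ge0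
           (fun v => 0 < v /\ M_alpha a v /\ M_alpha a ((1 - a) * v)) u); [tauto | tauto |].
  intros v [Hv0 [Hv Hv1]]. exists (a * v).
  assert (Hscale : forall x, M_alpha a x -> M_alpha a (a * x))
    by (intros x Hx; replace (a * x) with (powerRZ a 1 * x) by (simpl; ring);
        now apply M_alpha_scale).
  repeat split.
  - nra.
  - now apply Hscale.
  - replace ((1 - a) * (a * v)) with (a * ((1 - a) * v)) by ring. now apply Hscale.
  - now replace (v - a * v) with ((1 - a) * v) by ring.
  - nra.
Qed.

(* If every y - a^k had finitely many factorizations, so would the set of
   factorizations of y using some a^k with N <= k <= K, where a^k <= y forces
   N <= k and K bounds the exponents of a representation of y.  Any other
   factorization of y is a relation separated by K, contradicting ACCP. *)
Lemma ACCP_infinite_factorizations_step y :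
  ACCP (M_alpha a) -> M_alpha a y -> ~ finite_factorizations (M_alpha a) y ->
  exists k, M_alpha a (y - powerRZ a k) /\ ~ finite_factorizations (M_alpha a) (y - powerRZ a k).
Proof.
  intros Hacc Hy Hinf. apply NNPP. intros Hno.
  assert (Hfin : forall k, M_alpha a (y - powerRZ a k) ->
                           finite_factorizations (M_alpha a) (y - powerRZ a k))
    by (intros k Hk; apply NNPP; intro; apply Hno; eauto).
  assert (Hy0 : 0 < y).
  { pose proof (M_alpha_ge0 a a_gt0 y Hy). destruct (Req_dec y 0) as [->|]; [|lra].
    exfalso. now apply Hinf, (finite_factorizations_0 _ M_0 M_add M_ge0). }
  destruct (proj1 (M_alpha_sumpow a y) Hy) as [P HP].
  set (K := fold_right Z.max 0%Z P).
  destruct (powerRZ_le_exponent_bound y Hy0) as [N HN].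
  set (As := map (powerRZ a) (Zrange N (Z.to_nat (K - N + 1)))).
  destruct (finite_factorizations_meeting _ M_0 M_add y As)
    as [F HF]; [intros x [k [<- _]]%in_map_iff; apply Hfin|].
  assert (Hmiss : exists z, is_factorization (M_alpha a) y z /\ ~ exists x, In x As /\ In x z).
  { apply NNPP. intros Hnz. apply Hinf. exists F. intros z Hz.
    apply HF; [exact Hz|]. apply NNPP. intro. apply Hnz. eauto. }
  destruct Hmiss as [z [[Hz Hzsum] Hmiss]].
  destruct (atoms_M_alpha_exponents a a_gt0 z Hz) as [Zs ->].
  assert (HZs : Forall (fun k => K < k)%Z Zs).
  { apply Forall_forall. intros k Hk.
    assert (Hky : powerRZ a k <= y).
    { rewrite <- Hzsum. apply (In_factorization_le _ M_0 M_add M_ge0 _ _ Hz). now apply in_map. }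
    specialize (HN k Hky). destruct (Z_lt_le_dec K k) as [|HkK]; [assumption|].
    exfalso. apply Hmiss. exists (powerRZ a k).
    split; apply in_map; [apply In_Zrange; lia | exact Hk]. }
  destruct (separated_relation_contraction P Zs K) as [u [Hu0 [Hu Hu1]]].
  - intros ->. rewrite sumpow_nil in HP. lra.
  - apply Forall_le_fold_Zmax.
  - exact HZs.
  - rewrite <- HP. exact (eq_sym Hzsum).
  - exact (contraction_not_ACCP u Hu0 Hu Hu1 Hacc).
Qed.

Lemma ACCP_FFM_lt1 : ACCP (M_alpha a) -> FFM (M_alpha a).
Proof.
  intros Hacc. split; [now apply one_atom_atomic, ACCP_one_atom|].
  intros x [Hx _]. apply NNPP. intros Hinf.
  set (Q := fun y => M_alpha a y /\ ~ finite_factorizations (M_alpha a) y).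
  refine (not_ACCP_of_descent _ M_0 M_add M_ge0 Q x (conj Hx Hinf) _ _ Hacc); [firstorder|].
  intros y [Hy Hyinf].
  destruct (ACCP_infinite_factorizations_step y Hacc Hy Hyinf) as [k [Hk Hkinf]].
  exists (y - powerRZ a k). repeat split; [exact Hk | exact Hkinf | |].
  - replace (y - (y - powerRZ a k)) with (powerRZ a k) by ring. apply M_alpha_powerRZ.
  - pose proof (powerRZ_lt a k a_gt0). lra.
Qed.

End Contracting.

Lemma ACCP_FFM a : 0 < a -> ACCP (M_alpha a) -> FFM (M_alpha a).
Proof.
  intros Ha. destruct (Rtotal_order a 1) as [Hlt|[->|Hgt]].
  - now apply ACCP_FFM_lt1.
  - intros _. exact FFM_M_alpha_1.
  - rewrite <- (M_alpha_inv a). apply ACCP_FFM_lt1.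
    + now apply Rinv_0_lt_compat.
    + rewrite <- Rinv_1. apply Rinv_lt_contravar; lra.
Qed.

Theorem theorem4p3 (alpha : R) (halpha : 0 < alpha) :
  (FFM (M_alpha alpha) <-> BFM (M_alpha alpha)) /\
  (BFM (M_alpha alpha) <-> ACCP (M_alpha alpha)).
Proof.
  pose proof (FFM_BFM (M_alpha alpha)) as HFB.
  pose proof (BFM_ACCP _ (M_alpha_0 alpha) (M_alpha_add alpha) (M_alpha_ge0 alpha halpha)) as HBA.
  pose proof (ACCP_FFM alpha halpha) as HAF.
  tauto.
Qed.
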